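(* Let $G$ be a multigraph of even order with $\Delta(G) < \Gamma(G) \le \Delta(G)+1$, and write $\Delta = \Delta(G)$. Let $S \subseteq V(G)$ with $|S|$ odd, $|S|\ge 3$, such that $\langle S\rangle$ is $\Delta$-overfull in $G$ and $\operatorname{sl}(\langle S\rangle, \Delta)$ is minimum among all $\Delta$-overfull induced odd-order subgraphs of $G$. Then $\Delta(G_S) \le \Delta(G)$, $\Gamma(G_S) \le \Delta(G)+1$, $\Delta(G_{S^c}) \le \Delta(G)$, and $\Gamma(G_{S^c}) \le \Delta(G)+1$, where $S^c = V(G)\setminus S$.
   Context: Multigraphs are finite and loopless, multiple edges allowed. For $S \subseteq V(G)$, $\langle S\rangle$ is the induced subgraph. For a multigraph $H$ of odd order $n(H)\ge 3$ with $e(H)$ edges, $t(H) = 2e(H)/(n(H)-1)$; $H$ is $k$-overfull if $t(H)>k$. The $k$-slack is $\operatorname{sl}(H,k) = (k+1)(n(H)-1)/2 - e(H)$. $\Gamma(G) = \max\{t(\langle R\rangle) : R\subseteq V(G), |R| \text{ odd}, |R|\ge 3\}$ (statements about $\Gamma$ of a multigraph with no such $R$ are vacuous). Shrinking: for a nonempty proper subset $S$ of $V(G)$, $G_S$ has vertex set $(V(G)\setminus S)\cup\{s\}$ for a new vertex $s$; its edges are the edges of $G - S$ together with, for each $u \notin S$, exactly as many edges $us$ as there are edges of $G$ joining $u$ to vertices of $S$. *)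

From mathcomp Require Import all_boot all_order all_algebra.
Set Implicit Arguments. Unset Strict Implicit. Unset Printing Implicit Defensive.
Import Order.TTheory GRing.Theory Num.Theory.

(* A finite loopless multigraph is given by a vertex set W : {set V} inside a
   finite type V and a multiplicity function m : V -> V -> nat
   (m x y = number of edges joining x and y), symmetric and zero on the
   diagonal.  Only the values of m on W matter. *)

Definition is_multigraph (V : finType) (m : V -> V -> nat) : Prop :=
  (forall x y, m x y = m y x) /\ (forall x, m x x = 0%N).

Definition mdeg (V : finType) (m : V -> V -> nat) (W : {set V}) (x : V) : nat :=
  (\sum_(y in W) m x y)%N.

Definition mDelta (V : finType) (m : V -> V -> nat) (W : {set V}) : nat :=
  (\max_(x in W) mdeg m W x)%N.

(* number of edges of the induced subgraph <R> (each unordered pair counted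
   once; exact for symmetric loopless m) *)
Definition medges (V : finType) (m : V -> V -> nat) (R : {set V}) : nat :=
  (\sum_(x in R) \sum_(y in R) m x y)./2.

Definition mt (V : finType) (m : V -> V -> nat) (R : {set V}) : rat :=
  ((2 * medges m R)%N)%:R / ((#|R|.-1)%N)%:R.

Definition odd_sub (V : finType) (W R : {set V}) : bool :=
  [&& R \subset W, odd #|R| & (2 < #|R|)%N].

(* Gamma(G) = max of t(<R>) over odd R, |R| >= 3 (0 if there is none; statements
   about Gamma are then vacuous / trivially true as in the paper) *)
Definition mGamma (V : finType) (m : V -> V -> nat) (W : {set V}) : rat :=
  \big[Num.max/0%R]_(R : {set V} | odd_sub W R) mt m R.

Definition overfull (V : finType) (m : V -> V -> nat) (R : {set V}) (k : nat) : bool :=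
  (k%:R < mt m R)%R.

Definition slack (V : finType) (m : V -> V -> nat) (R : {set V}) (k : nat) : rat :=
  (((k + 1) * #|R|.-1)%N%:R / 2%:R - (medges m R)%:R)%R.

(* Shrinking S to a new vertex s: vertices of G_S are Some u (u in W \ S) and
   None (the new vertex s). *)
Definition shrink_set (V : finType) (W S : {set V}) : {set option V} :=
  None |: (Some @: (W :\: S)).

Definition shrink_adj (V : finType) (m : V -> V -> nat) (S : {set V})
  (a b : option V) : nat :=
  match a, b with
  | Some u, Some v => m u v
  | Some u, None => (\sum_(y in S) m u y)%N
  | None, Some v => (\sum_(y in S) m v y)%N
  | None, None => 0%N
  end.

From mathcomp Require Import all_boot all_order all_algebra.
From mathcomp Require Import zify ring lra.
Import Order.TTheory GRing.Theory Num.Theory.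
Set Implicit Arguments. Unset Strict Implicit. Unset Printing Implicit Defensive.

(* With [cross A B] the sum of m x y over x in A and y in B we have
   2 e(<R>) = cross R R, and every claim becomes a linear inequality between such
   counts.  Shrinking T keeps all degrees outside T and gives the new vertex the
   degree cross (W \ T) T; an odd induced subgraph of G_T either misses the new
   vertex, and is then an odd induced subgraph of G, or consists of the new vertex
   and an even R outside T, with 2 e = cross R R + 2 cross R T.
   Overfullness of <S> gives cross S (W \ S) < Delta.  For even R outside S
   compare S with R + S, and for even R inside S compare S with S \ R: either the
   comparison set is not Delta-overfull or, by minimality, its slack is at least
   that of S, and in both cases 2 e <= (Delta + 1) |R| follows. *)

Section Cross.
Variables (V : finType) (m : V -> V -> nat).
Implicit Types A B C W : {set V}.

Definition cross (A B : {set V}) : nat := \sum_(x in A) \sum_(y in B) m x y.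

Lemma crossDr A B C : B \subset C -> cross A C = cross A B + cross A (C :\: B).
Proof.
move=> BC; rewrite /cross -big_split; apply: eq_bigr => x _.
by rewrite (big_setID B) (setIidPr BC).
Qed.

Lemma cross_le_deg {W A} {D : nat} : A \subset W ->
  (forall x, x \in W -> mdeg m W x <= D) -> cross A W <= D * #|A|.
Proof.
move=> AW degD; rewrite mulnC -sum_nat_const; apply: leq_sum => x Ax.
exact/degD/(subsetP AW).
Qed.

Hypothesis msym : forall x y, m x y = m y x.
Hypothesis mloop : forall x, m x x = 0.

Lemma cross_sym A B : cross A B = cross B A.
Proof.
rewrite /cross exchange_big; apply: eq_bigr => x _; apply: eq_bigr => y _.
exact: msym.
Qed.

Lemma cross_set1 x : cross [set x] [set x] = 0.
Proof. by rewrite /cross !big_set1. Qed.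

Lemma cross_setID A B :
  cross A A = cross (A :&: B) (A :&: B) + cross (A :\: B) (A :\: B)
              + 2 * cross (A :&: B) (A :\: B).
Proof.
have split_in C : cross C A = cross C (A :&: B) + cross C (A :\: B).
  by rewrite /cross -big_split; apply: eq_bigr => x _; rewrite (big_setID B).
rewrite {1}/cross (big_setID B) /= -!/(cross _ A) !split_in.
rewrite (cross_sym (A :\: B)); lia.
Qed.

Lemma cross_even A : ~~ odd (cross A A).
Proof.
elim: {A}#|A| {-2}A (eqxx #|A|) => [|n IHn] A /eqP cardA.
  by move/eqP: cardA; rewrite cards_eq0 => /eqP ->; rewrite /cross big_set0.
have /card_gt0P[x Ax] : 0 < #|A| by rewrite cardA.
have cardAx : #|A :\: [set x]| == n.
  by move: cardA; rewrite (cardsD1 x) Ax add1n => -[->].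
rewrite (cross_setID A [set x]) (setIidPr _) ?sub1set // cross_set1.
by rewrite add0n oddD oddM andFb addbF IHn.
Qed.

Lemma double_medges A : 2 * medges m A = cross A A.
Proof.
rewrite /medges -/(cross A A) mul2n.
by have := odd_double_half (cross A A); rewrite (negbTE (cross_even A)).
Qed.

Lemma overfullE A (k : nat) : 1 < #|A| ->
  overfull m A k = (k * #|A|.-1 < cross A A).
Proof.
move=> A_gt1; rewrite /overfull /mt double_medges.
have pos : (0 < #|A|.-1%:R :> rat)%R by rewrite ltr0n; lia.
by rewrite ltr_pdivlMr // -natrM ltr_nat.
Qed.

Lemma mt_leE A (c : nat) : 1 < #|A| ->
  (mt m A <= c%:R)%R = (cross A A <= c * #|A|.-1).
Proof.
move=> A_gt1; rewrite /mt double_medges.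
have pos : (0 < #|A|.-1%:R :> rat)%R by rewrite ltr0n; lia.
by rewrite ler_pdivrMr // -natrM ler_nat.
Qed.

Lemma slack_leE A B (k : nat) : (slack m A k <= slack m B k)%R ->
  (k + 1) * #|A|.-1 + cross B B <= (k + 1) * #|B|.-1 + cross A A.
Proof.
have half C : ((medges m C)%:R = (cross C C)%:R / 2 :> rat)%R.
  by rewrite -double_medges natrM; field.
rewrite /slack !half -(ler_nat rat) !natrD; lra.
Qed.

End Cross.

Lemma mGamma_le (V : finType) (m : V -> V -> nat) (W : {set V}) (c : nat) :
  is_multigraph m ->
  (forall R, odd_sub W R -> cross m R R <= c * #|R|.-1) -> (mGamma m W <= c%:R)%R.
Proof.
move=> [msym mloop] Rc; apply: (big_ind (fun x => x <= c%:R)%R).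
- by rewrite ler0n.
- by move=> x y xc yc; rewrite ge_max xc yc.
- move=> R oddR; have /and3P[_ _ R_gt2] := oddR.
  by rewrite mt_leE //; [exact: Rc | exact: ltnW].
Qed.

Lemma mt_le_mGamma (V : finType) (m : V -> V -> nat) (W R : {set V}) :
  odd_sub W R -> (mt m R <= mGamma m W)%R.
Proof. by move=> oddR; rewrite /mGamma (bigD1 R) //= le_max lexx. Qed.

Section Shrink.
Variables (V : finType) (m : V -> V -> nat).
Hypothesis msym : forall x y, m x y = m y x.
Hypothesis mloop : forall x, m x x = 0.
Implicit Types (W T P : {set V}) (R : {set option V}).

Lemma shrink_multigraph T : is_multigraph (shrink_adj m T).
Proof. by split=> [[x|] [y|] | [x|]] //=. Qed.

Lemma setD1_None R : R :\ None = Some @: (Some @^-1: R).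
Proof.
apply/setP=> -[x|]; last by rewrite !inE; apply/esym/imsetP=> -[].
by rewrite !inE mem_imset ?inE //; exact: Some_inj.
Qed.

Lemma card_option_set R : #|R| = (None \in R) + #|Some @^-1: R|.
Proof. by rewrite (cardsD1 None) setD1_None card_imset //; exact: Some_inj. Qed.

Lemma cross_Some T P : cross (shrink_adj m T) (Some @: P) (Some @: P) = cross m P P.
Proof.
rewrite /cross big_imset /=; last by move=> ? ? _ _ [].
by apply: eq_bigr => x _; rewrite big_imset //; move=> ? ? _ _ [].
Qed.

Lemma cross_shrink_adj T R :
  cross (shrink_adj m T) R R =
  cross m (Some @^-1: R) (Some @^-1: R)
  + (None \in R) * (2 * cross m (Some @^-1: R) T).
Proof.
have [msymS mloopS] := shrink_multigraph T.
rewrite (cross_setID msymS R [set None]) setD1_None cross_Some.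
have [NR | NnR] := boolP (None \in R).
- rewrite (setIidPr _) ?sub1set // cross_set1 // add0n mul1n; congr (_ + 2 * _).
  by rewrite /cross big_set1 big_imset //; move=> ? ? _ _ [].
- have E : R :&: [set None] = set0.
    apply/setP=> a; rewrite !inE andbC.
    by have [->|] := eqVneq a None; [exact/negbTE | rewrite andFb].
  by rewrite E /cross !big_set0 addn0.
Qed.

Lemma preimset_Some_shrink W T : Some @^-1: shrink_set W T = W :\: T.
Proof. by apply/setP=> u; rewrite !inE /= mem_imset ?inE //; exact: Some_inj. Qed.

Lemma sum_shrink_set W T (F : option V -> nat) :
  \sum_(a in shrink_set W T) F a = F None + \sum_(u in W :\: T) F (Some u).
Proof.
rewrite big_setU1 /=; last by apply/imsetP=> -[].
by rewrite big_imset //; move=> ? ? _ _ [].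
Qed.

Lemma mdeg_shrink_Some W T u : T \subset W ->
  mdeg (shrink_adj m T) (shrink_set W T) (Some u) = mdeg m W u.
Proof.
by move=> TW; rewrite /mdeg sum_shrink_set [in RHS](big_setID T) (setIidPr TW).
Qed.

Lemma mdeg_shrink_None W T :
  mdeg (shrink_adj m T) (shrink_set W T) None = cross m (W :\: T) T.
Proof. by rewrite /mdeg sum_shrink_set. Qed.

Lemma shrink_mDelta_le W T : T \subset W -> cross m (W :\: T) T <= mDelta m W ->
  mDelta (shrink_adj m T) (shrink_set W T) <= mDelta m W.
Proof.
move=> TW boundary_le.
apply/bigmax_leqP=> -[u|] Wu; last by rewrite mdeg_shrink_None.
rewrite mdeg_shrink_Some //; apply: leq_bigmax_cond.
have : u \in Some @^-1: shrink_set W T by rewrite inE.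
by rewrite preimset_Some_shrink => /setDP[].
Qed.

Lemma shrink_mGamma_le W T (c : nat) : T \subset W ->
  (forall P, P \subset W :\: T -> odd #|P| -> 2 < #|P| ->
     cross m P P <= c * #|P|.-1) ->
  (forall P, P \subset W :\: T -> ~~ odd #|P| ->
     cross m P P + 2 * cross m P T <= c * #|P|) ->
  (mGamma (shrink_adj m T) (shrink_set W T) <= c%:R)%R.
Proof.
move=> TW odd_le even_le; apply: mGamma_le; first exact: shrink_multigraph.
move=> R /and3P[RW oddR R_gt2]; rewrite cross_shrink_adj.
have PW : Some @^-1: R \subset W :\: T.
  by rewrite -(preimset_Some_shrink W T) preimsetS.
rewrite card_option_set in oddR R_gt2 *.
case: (None \in R) oddR R_gt2 => [oddP _ | oddP P_gt2] /=.
- by rewrite mul1n add0n in oddP *; exact: even_le.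
- by rewrite !add0n addn0 in oddP P_gt2 *; exact: odd_le.
Qed.

End Shrink.

Section MinimalSlack.
Variables (V : finType) (m : V -> V -> nat) (W S : {set V}) (D : nat).
Implicit Types R : {set V}.
Hypothesis msym : forall x y, m x y = m y x.
Hypothesis mloop : forall x, m x x = 0.
Hypothesis SW : S \subset W.
Hypothesis oddS : odd #|S|.
Hypothesis mdeg_le : forall x, x \in W -> mdeg m W x <= D.
Hypothesis overfullS : D * #|S|.-1 < cross m S S.
Hypothesis slack_minS : forall R, R \subset W -> odd #|R| -> 2 < #|R| ->
  D * #|R|.-1 < cross m R R ->
  (D + 1) * #|S|.-1 + cross m R R <= (D + 1) * #|R|.-1 + cross m S S.

Lemma cross_boundary_lt : cross m S (W :\: S) < D.
Proof.
have := cross_le_deg SW mdeg_le; rewrite (crossDr m S SW).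
by move: overfullS; rewrite -(prednK (odd_gt0 oddS)) mulnS; lia.
Qed.

Lemma overfull_or_slack R : R \subset W -> odd #|R| ->
  cross m R R <= D * #|R|.-1 \/
  (D + 1) * #|S|.-1 + cross m R R <= (D + 1) * #|R|.-1 + cross m S S.
Proof.
move=> RW oddR.
case: (leqP (cross m R R) (D * #|R|.-1)) => [|overfullR]; [by left | right].
apply: slack_minS => //.
have [/eqP/cards1P[x Rx] | R_neq1] := eqVneq #|R| 1.
  by rewrite Rx cross_set1 in overfullR.
by case: #|R| oddR R_neq1 => [|[|[|n]]].
Qed.

Lemma shrink_even_le R : R \subset W :\: S -> ~~ odd #|R| ->
  cross m R R + 2 * cross m R S <= (D + 1) * #|R|.
Proof.
rewrite subsetD => /andP[RW disjRS] evenR.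
have UW : R :|: S \subset W by rewrite subUset RW SW.
have cardU : #|R :|: S| = #|R| + #|S|.
  by rewrite cardsU disjoint_setI0 // cards0 subn0.
have oddU : odd #|R :|: S| by rewrite cardU oddD oddS (negbTE evenR).
have crossU :
    cross m (R :|: S) (R :|: S) = cross m R R + cross m S S + 2 * cross m R S.
  rewrite (cross_setID msym _ S) (setIidPr (subsetUr R S)) setDUl setDv setU0.
  by rewrite (setDidPl disjRS) (cross_sym msym S); lia.
have predU : #|R :|: S|.-1 = #|R| + #|S|.-1.
  by rewrite cardU; have := odd_gt0 oddS; lia.
move: overfullS; case: (overfull_or_slack UW oddU); rewrite crossU predU.
all: by rewrite !mulnDr !mulnDl !mul1n; lia.
Qed.

Lemma shrink_compl_even_le R : R \subset S -> ~~ odd #|R| ->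
  cross m R R + 2 * cross m R (W :\: S) <= (D + 1) * #|R|.
Proof.
move=> RS evenR; set T := S :\: R.
have TW : T \subset W := subset_trans (subsetDl S R) SW.
have crossS := cross_setID msym S R; rewrite (setIidPr RS) -/T in crossS.
have cardS : #|S| = #|R| + #|T| by rewrite -(cardsID R S) (setIidPr RS).
have oddT : odd #|T| by move: oddS; rewrite cardS oddD (negbTE evenR).
have predS : #|S|.-1 = #|R| + #|T|.-1 by rewrite cardS; have := odd_gt0 oddT; lia.
have := cross_le_deg (subset_trans RS SW) mdeg_le.
rewrite (crossDr m R SW) (crossDr m R RS) -/T.
move: overfullS; case: (overfull_or_slack TW oddT); rewrite crossS predS.
all: by rewrite !mulnDr !mulnDl !mul1n; lia.
Qed.

End MinimalSlack.

Theorem lemmaH (V : finType) (m : V -> V -> nat) (W S : {set V}) :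
  is_multigraph m ->
  ~~ odd #|W| ->
  ((mDelta m W)%:R < mGamma m W)%R ->
  (mGamma m W <= (mDelta m W + 1)%N%:R)%R ->
  S \subset W -> odd #|S| -> (2 < #|S|)%N ->
  overfull m S (mDelta m W) ->
  (forall R : {set V}, R \subset W -> odd #|R| -> (2 < #|R|)%N ->
     overfull m R (mDelta m W) ->
     (slack m S (mDelta m W) <= slack m R (mDelta m W))%R) ->
  [/\ (mDelta (shrink_adj m S) (shrink_set W S) <= mDelta m W)%N,
      (mGamma (shrink_adj m S) (shrink_set W S) <= (mDelta m W + 1)%N%:R)%R,
      (mDelta (shrink_adj m (W :\: S)) (shrink_set W (W :\: S)) <= mDelta m W)%N
    & (mGamma (shrink_adj m (W :\: S)) (shrink_set W (W :\: S))
         <= (mDelta m W + 1)%N%:R)%R].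
Proof.
move=> [msym mloop] _ _ mGamma_leD SW oddS S_gt2 overfullS slack_min.
set D := mDelta m W in mGamma_leD overfullS slack_min *.
have mdeg_le x : x \in W -> mdeg m W x <= D by move=> Wx; exact: leq_bigmax_cond.
have odd_le (R : {set V}) : R \subset W -> odd #|R| -> 2 < #|R| ->
    cross m R R <= (D + 1) * #|R|.-1.
  move=> RW oddR R_gt2; rewrite -mt_leE //; last exact: ltnW.
  by apply: le_trans mGamma_leD; apply/mt_le_mGamma/and3P.
rewrite overfullE // in overfullS; last exact: ltnW.
have slack_minS (R : {set V}) : R \subset W -> odd #|R| -> 2 < #|R| ->
    D * #|R|.-1 < cross m R R ->
    (D + 1) * #|S|.-1 + cross m R R <= (D + 1) * #|R|.-1 + cross m S S.
  move=> RW oddR R_gt2 overfullR; apply: slack_leE => //; apply: slack_min => //.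
  by rewrite overfullE // ltnW.
have boundary_le : cross m S (W :\: S) <= D by exact/ltnW/cross_boundary_lt.
have complK : W :\: (W :\: S) = S by rewrite setDDr setDv set0U (setIidPr SW).
split.
- by apply: shrink_mDelta_le; rewrite // cross_sym.
- apply: shrink_mGamma_le => // R RWS; last by apply: (shrink_even_le (W := W)).
  by apply: odd_le; exact: subset_trans RWS (subsetDl W S).
- by apply: shrink_mDelta_le; rewrite ?subsetDl ?complK.
- apply: shrink_mGamma_le; rewrite ?subsetDl ?complK // => R RS.
  + by apply: odd_le; exact: subset_trans RS SW.
  + by apply: shrink_compl_even_le.
Qed.
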